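(* Let $n\ge 4$ and let $G$ be the complete sun graph on $2n$ vertices. Then for every integer $r\ge 3$, the $r$-th power of $G$ satisfies $\varphi(G^r)=(n-1)(2n-1)$.
   Context: All graphs are finite, simple and without isolated vertices. $\mathbb{N}_0$ denotes the set of non-negative integers; for finite $A,B\subseteq\mathbb{N}_0$, $A+B=\{a+b: a\in A, b\in B\}$. An integer additive set-indexer (IASI) of a graph $G$ is an injective map $f$ from $V(G)$ to the finite non-empty subsets of $\mathbb{N}_0$ such that the induced edge map $f^+(uv)=f(u)+f(v)$ is injective on $E(G)$. A weak IASI (WIASI) is an IASI $f$ with $|f^+(uv)|=\max(|f(u)|,|f(v)|)$ for every edge $uv$ (equivalently, for every edge at least one end vertex has a singleton label). A vertex or edge is mono-indexed if its set-label has cardinality $1$. Every graph admits a WIASI. The sparing number $\varphi(G)$ is the minimum, over all WIASIs of $G$, of the number of mono-indexed edges of $G$. The $r$-th power $G^r$ has vertex set $V(G)$, two distinct vertices being adjacent iff their distance in $G$ is at most $r$. The complete sun graph on $2n$ vertices ($n\ge 3$) has vertex set $U\cup W$ with $U=\{u_1,\dots,u_n\}$, $W=\{w_1,\dots,w_n\}$, where $U$ induces a complete graph, $W$ is an independent set, and $w_j$ is adjacent to $u_i$ if and only if $j=i$ or $j\equiv i+1 \pmod n$. *)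

From mathcomp Require Import all_boot.
Set Implicit Arguments. Unset Strict Implicit. Unset Printing Implicit Defensive.

Definition simple_graph (T : finType) (e : rel T) : Prop :=
  irreflexive e /\ symmetric e.

(* Finite subsets of N_0 are represented by duplicate-free lists of their
   elements; set equality is =i, cardinality is size. *)
Definition sumset (A B : seq nat) : seq nat :=
  undup [seq a + b | a <- A, b <- B].

Definition card_ns (A : seq nat) : nat := size (undup A).

Definition is_IASI (T : finType) (e : rel T) (f : T -> seq nat) : Prop :=
  (forall x, uniq (f x) /\ f x != [::]) /\
  (forall x y, f x =i f y -> x = y) /\
  (forall u v u' v', e u v -> e u' v' ->
     sumset (f u) (f v) =i sumset (f u') (f v') ->
     (u = u' /\ v = v') \/ (u = v' /\ v = u')).

Definition is_WIASI (T : finType) (e : rel T) (f : T -> seq nat) : Prop :=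
  is_IASI e f /\
  (forall u v, e u v ->
     card_ns (sumset (f u) (f v)) = maxn (card_ns (f u)) (card_ns (f v))).

Definition edges (T : finType) (e : rel T) : {set {set T}} :=
  [set [set x; y] | x in T, y in T & e x y].

Definition mono_edges (T : finType) (e : rel T) (f : T -> seq nat) : nat :=
  #|[set [set x; y] | x in T, y in T &
       e x y && (card_ns (sumset (f x) (f y)) == 1)]|.

Definition is_sparing_number (T : finType) (e : rel T) (k : nat) : Prop :=
  (exists f, is_WIASI e f /\ mono_edges e f = k) /\
  (forall f, is_WIASI e f -> k <= mono_edges e f).

Fixpoint walk_le (T : finType) (e : rel T) (k : nat) (x y : T) : bool :=
  match k with
  | 0 => x == y
  | k'.+1 => walk_le e k' x y || [exists z, walk_le e k' x z && e z y]
  end.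

Definition graph_pow (T : finType) (e : rel T) (r : nat) : rel T :=
  fun x y => (x != y) && walk_le e r x y.

(* Complete sun graph on 2n vertices: inl i = u_i, inr j = w_j
   (indices 0..n-1). *)
Definition sun_adj (n : nat) (x y : 'I_n + 'I_n) : bool :=
  match x, y with
  | inl i, inl j => i != j
  | inl i, inr j => (val j == val i) || (val j == (val i).+1 %% n)
  | inr j, inl i => (val j == val i) || (val j == (val i).+1 %% n)
  | inr _, inr _ => false
  end.

From mathcomp Require Import all_boot zify.
Set Implicit Arguments. Unset Strict Implicit. Unset Printing Implicit Defensive.

(* The complete sun graph has diameter 3: every vertex lies on or next to the
   clique U, and U is complete.  Hence G^r is the complete graph K_{2n} for
   r >= 3, and the theorem reduces to the sparing number of K_m being
   C(m-1, 2).  In a WIASI of a complete graph two vertices with non-singleton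
   labels cannot be adjacent, since |A + B| > max(|A|, |B|) once |A|, |B| >= 2;
   so at least m-1 vertices are mono-indexed and all edges among them are
   mono-indexed.  Conversely, labelling one vertex {2^k, 2^k + 1} and every
   other vertex v with {2^(rank v)} is a WIASI: the least element of an edge
   label is a sum of two distinct powers of 2, which determines the edge. *)

Section Walks.

Variables (T : finType) (e : rel T).

Lemma walk_le_refl k x : walk_le e k x x.
Proof. by elim: k => [|k IHk] /=; rewrite ?eqxx ?IHk. Qed.

Lemma walk_le1 x y : (x == y) || e x y -> walk_le e 1 x y.
Proof.
case/orP=> [/eqP -> | exy] /=; first by rewrite eqxx.
by apply/orP; right; apply/existsP; exists x; rewrite eqxx.
Qed.

Lemma walk_le_cat k1 k2 x z y :
  walk_le e k1 x z -> walk_le e k2 z y -> walk_le e (k1 + k2) x y.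
Proof.
move=> xz; elim: k2 y => [|k IHk] y /=; first by rewrite addn0 => /eqP <-.
rewrite addnS /= => /orP[/IHk -> // | /existsP[z' /andP[zz' ez'y]]].
by apply/orP; right; apply/existsP; exists z'; rewrite IHk.
Qed.

End Walks.

Definition sun_hub n (x : 'I_n + 'I_n) : 'I_n :=
  match x with inl i | inr i => i end.

Lemma sun_walk_le_hub n (x : 'I_n + 'I_n) :
  walk_le (@sun_adj n) 1 x (inl (sun_hub x)) /\
  walk_le (@sun_adj n) 1 (inl (sun_hub x)) x.
Proof. by split; apply: walk_le1; case: x => i /=; rewrite eqxx ?orbT. Qed.

Lemma sun_walk_le3 n (x y : 'I_n + 'I_n) : walk_le (@sun_adj n) 3 x y.
Proof.
have [xh _] := sun_walk_le_hub x; have [_ hy] := sun_walk_le_hub y.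
rewrite -[3]/(1 + 1 + 1); apply: (walk_le_cat (walk_le_cat xh _) hy).
by apply: walk_le1 => /=; rewrite orbN.
Qed.

Lemma graph_pow_sun n r (x y : 'I_n + 'I_n) : 3 <= r ->
  graph_pow (@sun_adj n) r x y = (x != y).
Proof.
move=> hr; rewrite /graph_pow; case: (x != y) => //=.
rewrite -(subnKC hr) addnC.
exact: walk_le_cat (walk_le_refl _ _ _) (sun_walk_le3 x y).
Qed.

Lemma card_ns_gt0 (A : seq nat) : A != [::] -> 0 < card_ns A.
Proof.
by move=> A0; rewrite /card_ns lt0n size_eq0; apply: contra A0 => /eqP/undup_nil ->.
Qed.

Lemma card_sumsetC A B : card_ns (sumset A B) = card_ns (sumset B A).
Proof.
rewrite /card_ns; apply/perm_size/uniq_perm; rewrite ?undup_uniq // => z.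
rewrite !mem_undup; apply/allpairsP/allpairsP => -[[a b] /= [aA bB ->]];
  by exists (b, a); rewrite /= addnC.
Qed.

Lemma exists_max_seq (A : seq nat) : A != [::] ->
  exists2 m, m \in A & forall a, a \in A -> a <= m.
Proof.
elim: A => // x A IHA _; have [-> | /IHA[m mA maxm]] := eqVneq A [::].
  by exists x => [|a]; rewrite inE // => /eqP ->.
exists (maxn x m) => [|a].
  by rewrite /maxn; case: ltnP; rewrite !inE ?eqxx ?mA ?orbT.
by rewrite inE => /predU1P[-> | /maxm]; [exact: leq_maxl | rewrite leq_max orbC => ->].
Qed.

(* With b1 < b2 in B and m = max A, the sumset contains A + b1 and m + b2. *)
Lemma card_sumset_gt A B : A != [::] -> 1 < card_ns B ->
  card_ns A < card_ns (sumset A B).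
Proof.
move=> A0 B2; have [b1 [b2 [b1B b2B lt_b12]]] :
    exists b1 b2, [/\ b1 \in B, b2 \in B & b1 < b2].
  have [x [y [xB yB xy]]] : exists x y, [/\ x \in B, y \in B & x != y].
    move: B2 (undup_uniq B); rewrite /card_ns.
    have subB : {subset undup B <= B} by move=> z; rewrite mem_undup.
    case: (undup B) subB => [|x [|y s]] //= subB _ /andP[xys _].
    exists x, y; split; try by apply: subB; rewrite !inE eqxx ?orbT.
    by apply: contraNneq xys => ->; rewrite inE eqxx.
  by case: (ltngtP x y) xy => // [xy | yx] _; [exists x, y | exists y, x].
have [m mA maxm] := exists_max_seq A0.
rewrite [card_ns (sumset _ _)]/card_ns undup_id ?undup_uniq //.
have -> : (card_ns A).+1 = size ((m + b2) :: [seq a + b1 | a <- undup A]).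
  by rewrite /= size_map.
apply: uniq_leq_size => [|z].
  rewrite /= (map_inj_uniq (@addIn b1)) undup_uniq andbT.
  by apply/mapP => -[a]; rewrite mem_undup => /maxm; lia.
rewrite inE mem_undup => /predU1P[-> | /mapP[a]]; first exact: allpairs_f.
by rewrite mem_undup => aA ->; exact: allpairs_f.
Qed.

Lemma logn2_pow2_sum a b : a < b -> logn 2 (2 ^ a + 2 ^ b) = a.
Proof.
move=> ab; rewrite -(subnKC (ltnW ab)) expnD -{1}[2 ^ a]muln1 -mulnDr.
rewrite lognM ?expn_gt0 // pfactorK // lognE /= dvdn2 oddD oddX.
by rewrite subn_eq0 leqNgt ab addn0.
Qed.

Lemma pow2_sum_ordered_inj a b c d : a < b -> c < d ->
  2 ^ a + 2 ^ b = 2 ^ c + 2 ^ d -> a = c /\ b = d.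
Proof.
move=> ab cd E; have ac : a = c by rewrite -(logn2_pow2_sum ab) E logn2_pow2_sum.
by split=> //; apply: (expnI (ltnSn 1)); move: E; rewrite ac => /addnI.
Qed.

Lemma pow2_sum_inj a b c d : a != b -> c != d ->
  2 ^ a + 2 ^ b = 2 ^ c + 2 ^ d -> (a = c /\ b = d) \/ (a = d /\ b = c).
Proof.
move=> + + E; case: ltngtP => // ab _; case: ltngtP => // cd _.
- by left; apply: pow2_sum_ordered_inj.
- by right; apply: pow2_sum_ordered_inj; rewrite // E addnC.
- by right; case: (pow2_sum_ordered_inj ab cd); rewrite // addnC E.
- by left; case: (pow2_sum_ordered_inj ab cd); rewrite // addnC E addnC.
Qed.

Definition least_in (m : nat) (A : seq nat) : bool := (m \in A) && all (leq m) A.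

Lemma least_in_unique m m' A B :
  least_in m A -> least_in m' B -> A =i B -> m = m'.
Proof.
move=> /andP[mA /allP minA] /andP[m'B /allP minB] AB.
by apply/eqP; rewrite eqn_leq minA ?AB // minB -?AB.
Qed.

Lemma least_in_sumset a b A B :
  least_in a A -> least_in b B -> least_in (a + b) (sumset A B).
Proof.
move=> /andP[aA /allP minA] /andP[bB /allP minB].
rewrite /least_in mem_undup allpairs_f //=; apply/allP => z.
by rewrite mem_undup => /allpairsP[[x y] /= [xA yB ->]]; rewrite leq_add ?minA ?minB.
Qed.

Lemma card_sumset_succ_single a b : card_ns (sumset [:: a; a.+1] [:: b]) = 2.
Proof.
rewrite /card_ns /sumset /= !inE addSn (ltn_eqF (ltnSn _)) /=.
by rewrite inE (ltn_eqF (ltnSn _)).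
Qed.

Definition mono_vertices (T : finType) (f : T -> seq nat) : {set T} :=
  [set v | card_ns (f v) == 1].

Section CompleteGraph.

Variables (T : finType) (e : rel T).
Hypothesis e_complete : forall x y, e x y = (x != y).

Section Wiasi.

Variables (f : T -> seq nat).
Hypothesis f_wiasi : is_WIASI e f.

Lemma wiasi_label_neq0 x : f x != [::].
Proof. by case: f_wiasi => -[/(_ x)[]]. Qed.

Lemma wiasi_card_sumset x y : x != y ->
  card_ns (sumset (f x) (f y)) = maxn (card_ns (f x)) (card_ns (f y)).
Proof. by case: f_wiasi => _ card_f xy; apply: card_f; rewrite e_complete. Qed.

Lemma wiasi_complete_mono_end x y : x != y ->
  (x \in mono_vertices f) || (y \in mono_vertices f).
Proof.
move=> xy; rewrite !inE; apply/negPn/negP; rewrite negb_or => /andP[x_n1 y_n1].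
have x_gt1 : 1 < card_ns (f x) by have := card_ns_gt0 (wiasi_label_neq0 x); lia.
have y_gt1 : 1 < card_ns (f y) by have := card_ns_gt0 (wiasi_label_neq0 y); lia.
have := card_sumset_gt (wiasi_label_neq0 x) y_gt1.
have := card_sumset_gt (wiasi_label_neq0 y) x_gt1.
rewrite card_sumsetC wiasi_card_sumset //; lia.
Qed.

Lemma card_mono_vertices_wiasi : #|T|.-1 <= #|mono_vertices f|.
Proof.
rewrite -(cardsC (mono_vertices f)).
suff : #|~: mono_vertices f| <= 1 by lia.
rewrite leqNgt; apply/card_gt1P => -[x [y [xS yS xy]]].
rewrite !in_setC in xS yS.
by move: (wiasi_complete_mono_end xy); rewrite (negbTE xS) (negbTE yS).
Qed.

Lemma mono_edges_complete : mono_edges e f = 'C(#|mono_vertices f|, 2).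
Proof.
rewrite /mono_edges -cards_draws; apply: eq_card => E; rewrite !inE.
apply/imset2P/andP => [[x y _] | [sub_ES /cards2P[x [y [xy E_xy]]]]].
  rewrite inE e_complete => /andP[_ /andP[xy sum1]] ->.
  rewrite cards2 xy subUset !sub1set !inE.
  move: sum1; rewrite wiasi_card_sumset //.
  have := card_ns_gt0 (wiasi_label_neq0 x); have := card_ns_gt0 (wiasi_label_neq0 y).
  lia.
rewrite E_xy subUset !sub1set !inE in sub_ES *; case/andP: sub_ES => x1 y1.
exists x y => //; rewrite inE e_complete xy wiasi_card_sumset //.
by rewrite (eqP x1) (eqP y1).
Qed.

End Wiasi.

Section Pow2Labelling.

Variable v0 : T.

Definition pow2_rank (v : T) : nat := 2 ^ enum_rank v.

Definition pow2_label (v : T) : seq nat :=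
  if v == v0 then [:: pow2_rank v; (pow2_rank v).+1] else [:: pow2_rank v].

Lemma enum_rank_nat_inj : injective (fun v : T => nat_of_ord (enum_rank v)).
Proof. by move=> x y /val_inj/enum_rank_inj. Qed.

Lemma least_in_pow2_label v : least_in (pow2_rank v) (pow2_label v).
Proof.
by rewrite /pow2_label; case: ifP => _; rewrite /least_in /= !inE eqxx /= leqnn ?leqnSn.
Qed.

Lemma card_pow2_label v : card_ns (pow2_label v) = (v == v0).+1.
Proof.
by rewrite /pow2_label; case: ifP => //= _; rewrite /card_ns /= inE (ltn_eqF (ltnSn _)).
Qed.

Lemma pow2_label_wiasi : is_WIASI e pow2_label.
Proof.
split; [split; [|split] | ].
- by move=> v; rewrite /pow2_label; case: ifP => //= _; rewrite inE (ltn_eqF (ltnSn _)).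
- move=> x y /least_in_unique => /(_ _ _ (least_in_pow2_label x) (least_in_pow2_label y)).
  by move/(expnI (ltnSn 1))/enum_rank_nat_inj.
- move=> u v u' v'; rewrite !e_complete => uv uv' /least_in_unique.
  move=> /(_ _ _ (least_in_sumset (least_in_pow2_label u) (least_in_pow2_label v))).
  move=> /(_ _ (least_in_sumset (least_in_pow2_label u') (least_in_pow2_label v'))).
  rewrite /pow2_rank => /pow2_sum_inj; rewrite !(inj_eq enum_rank_nat_inj).
  by case/(_ uv uv') => -[/enum_rank_nat_inj-> /enum_rank_nat_inj->]; [left | right].
- move=> u v; rewrite e_complete !card_pow2_label => uv.
  rewrite /pow2_label; case: (eqVneq u v0) uv => [-> | _] uv.
    by rewrite eq_sym (negbTE uv) card_sumset_succ_single.
  case: eqVneq => _ //=.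
  by rewrite card_sumsetC card_sumset_succ_single.
Qed.

Lemma card_mono_vertices_pow2_label : #|mono_vertices pow2_label| = #|T|.-1.
Proof.
rewrite -(cardsC1 v0); apply: eq_card => v.
by rewrite !inE card_pow2_label; case: (v == v0).
Qed.

End Pow2Labelling.

Lemma sparing_number_complete (v0 : T) : is_sparing_number e 'C(#|T|.-1, 2).
Proof.
split=> [|f f_wiasi].
  exists (pow2_label v0); split; first exact: pow2_label_wiasi.
  by rewrite (mono_edges_complete (pow2_label_wiasi v0)) card_mono_vertices_pow2_label.
by rewrite (mono_edges_complete f_wiasi) leq_bin2l // card_mono_vertices_wiasi.
Qed.

End CompleteGraph.

Lemma bin2_pred_addnn n : 'C((n + n).-1, 2) = (n - 1) * (2 * n - 1).
Proof.
rewrite bin2; have -> : (n + n).-1 * (n + n).-2 = ((n - 1) * (2 * n - 1)).*2.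
  by case: n => // m; rewrite -muln2; nia.
by rewrite doubleK.
Qed.

Theorem mainTheorem6 (n : nat) (hn : 4 <= n) (r : nat) (hr : 3 <= r) :
  is_sparing_number (graph_pow (@sun_adj n) r) ((n - 1) * (2 * n - 1)).
Proof.
have v0 : 'I_n + 'I_n := inl (Ordinal (leq_trans (isT : 0 < 4) hn)).
have := sparing_number_complete (fun x y => graph_pow_sun x y hr) v0.
by rewrite card_sum card_ord bin2_pred_addnn.
Qed.
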